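(* Let $m=2$ attributes take values in $\{1,\dots,d\}$, let $p(x,z)=p(z)p(x\mid z)$ be a training distribution with attribute support $\mathcal{Z}^{\mathsf{train}}$, and suppose $p(\cdot\mid z)$ is an additive energy distribution, not uniform, for every $z\in\mathcal{Z}^{\times}$. Suppose $\mathsf{DAff}(\mathcal{Z}^{\mathsf{train}})\ne\mathcal{Z}^{\times}$. Then there exists an additive energy model $\hat p(x\mid z)=\frac{1}{\hat{\mathbb{Z}}(z)}\exp(-\langle\sigma(z),\hat E(x)\rangle)$ that maximizes the likelihood and exactly matches the training distributions, i.e. $\hat p(\cdot\mid z)=p(\cdot\mid z)$ for all $z\in\mathcal{Z}^{\mathsf{train}}$, but such that $\hat p(\cdot\mid z)\ne p(\cdot\mid z)$ for some $z\in\mathcal{Z}^{\times}$.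
   Context: $\sigma(z)\in\{0,1\}^{2d}$ is the concatenation of the one-hot encodings of $z_1,z_2$. An additive energy distribution family is $p(x\mid z)=\frac{1}{\mathbb{Z}(z)}\exp(-\langle\sigma(z),E(x)\rangle)$ with $E:\mathbb{R}^n\to\mathbb{R}^{2d}$ and $\mathbb{Z}(z)=\int\exp(-\langle\sigma(z),E(x)\rangle)dx<\infty$. $\mathcal{Z}_i^{\mathsf{train}}$ is the set of values of the $i$-th coordinate on $\mathcal{Z}^{\mathsf{train}}$ and $\mathcal{Z}^{\times}=\mathcal{Z}_1^{\mathsf{train}}\times\mathcal{Z}_2^{\mathsf{train}}$. For finite $\mathcal{A}=\{z^{(1)},\dots,z^{(k)}\}$, $\mathsf{DAff}(\mathcal{A})=\{z\in\{1,\dots,d\}^2:\exists\alpha\in\mathbb{R}^k,\ \sum_i\alpha_i=1,\ \sigma(z)=\sum_i\alpha_i\sigma(z^{(i)})\}$. *)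

From HB Require Import structures.
From mathcomp Require Import all_boot all_order all_algebra.
From mathcomp Require Import all_classical all_reals all_analysis.
Set Implicit Arguments. Unset Strict Implicit. Unset Printing Implicit Defensive.
Import Order.TTheory GRing.Theory Num.Theory.
Local Open Scope classical_set_scope.
Local Open Scope ring_scope.

Section Defs.
Variable R : realType.

(* one-hot encoding of a value in {1,...,d} (represented by 'I_d) *)
Definition onehot (d : nat) (i : 'I_d) : 'rV[R]_d := delta_mx 0 i.

Definition sigma (d : nat) (z : 'I_d * 'I_d) : 'rV[R]_(d + d) :=
  row_mx (onehot z.1) (onehot z.2).

Definition pairing (k : nat) (u v : 'rV[R]_k) : R := \sum_(i < k) u 0 i * v 0 i.

Definition DAff (d : nat) (A : {set 'I_d * 'I_d}) : set ('I_d * 'I_d) :=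
  [set z | exists alpha : 'I_d * 'I_d -> R,
      \sum_(w in A) alpha w = 1 /\ sigma z = \sum_(w in A) alpha w *: sigma w].

Definition Zcross (d : nat) (A : {set 'I_d * 'I_d}) : {set 'I_d * 'I_d} :=
  finset.setX (finset (fun i => [exists w in A, w.1 == i]))
       (finset (fun i => [exists w in A, w.2 == i])).

Definition gibbs (n d : nat) (E : n.-tuple R -> 'rV[R]_(d + d))
  (z : 'I_d * 'I_d) (x : n.-tuple R) : R :=
  expR (- pairing (sigma z) (E x)).

Definition partition (n d : nat) (mu : {measure set (n.-tuple R) -> \bar R})
  (E : n.-tuple R -> 'rV[R]_(d + d)) (z : 'I_d * 'I_d) : \bar R :=
  (\int[mu]_x (gibbs E z x)%:E)%E.

Definition aed (n d : nat) (mu : {measure set (n.-tuple R) -> \bar R})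
  (E : n.-tuple R -> 'rV[R]_(d + d)) (z : 'I_d * 'I_d) (x : n.-tuple R) : R :=
  gibbs E z x / fine (partition mu E z).

Definition additive_energy_family (n d : nat)
  (mu : {measure set (n.-tuple R) -> \bar R})
  (S : {set 'I_d * 'I_d}) (E : n.-tuple R -> 'rV[R]_(d + d)) : Prop :=
  forall z, z \in S -> mu.-integrable setT (fun x => (gibbs E z x)%:E).

(* mu is the Lebesgue measure on R^n = n.-tuple R (with the product Borel
   sigma-algebra): it gives every half-open box its volume.  This determines
   mu uniquely (pi-lambda theorem, boxes are finite and cover R^n). *)
Definition is_lebesgue_tuple (n : nat)
  (mu : {measure set (n.-tuple R) -> \bar R}) : Prop :=
  forall a b : n.-tuple R, (forall i, tnth a i <= tnth b i) ->
    mu [set x | forall i, tnth a i <= tnth x i < tnth b i] =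
    (\prod_(i < n) (tnth b i - tnth a i))%:E.

End Defs.
Arguments DAff {R d} A.

(** Pick [z] in [Zcross Ztrain] outside [DAff Ztrain].  Since the left block
    of every [sigma w] sums to one, [sigma z] is not even in the linear span of
    the training encodings, so some direction [v] is orthogonal to all of them
    but not to [sigma z].  Moving the energy along [v] by the bounded amount
    [g x = exp (- exp (- <sigma z, E x>))] leaves every training conditional
    unchanged, whereas at [z] the new density can agree with [p z] almost
    everywhere only if [g], hence [p z], is almost everywhere constant. *)

From Pilot Require Import Defs.
From HB Require Import structures.
From mathcomp Require Import all_boot all_order all_algebra.
From mathcomp Require Import all_classical all_reals all_analysis.
From mathcomp Require Import measurable_realfun.

Set Implicit Arguments.
Unset Strict Implicit.
Unset Printing Implicit Defensive.
Import Order.TTheory GRing.Theory Num.Theory.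
Local Open Scope classical_set_scope.
Local Open Scope ring_scope.

Section AffineSpan.
Variables (R : realType) (d : nat).
Implicit Types (S : {set 'I_d * 'I_d}) (z w : 'I_d * 'I_d).

Lemma sigma_lshift z i : sigma R z 0 (lshift d i) = (i == z.1)%:R.
Proof. by rewrite /sigma row_mxEl /onehot mxE eqxx. Qed.

Lemma sigma_rshift z i : sigma R z 0 (rshift d i) = (i == z.2)%:R.
Proof. by rewrite /sigma row_mxEr /onehot mxE eqxx. Qed.

Lemma sum_sigma_lshift z : \sum_(i < d) sigma R z 0 (lshift d i) = 1.
Proof.
rewrite (bigD1 z.1) //= sigma_lshift eqxx big1 ?addr0 // => j /negbTE.
by rewrite sigma_lshift => ->.
Qed.

Lemma lincomb_sigmaE S (alpha : _ -> R) k :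
  (\sum_(w in S) alpha w *: sigma R w) 0 k = \sum_(w in S) alpha w * sigma R w 0 k.
Proof. by rewrite summxE; apply: eq_bigr => w _; rewrite mxE. Qed.

Lemma mem_Zcross S w : w \in S -> w \in Zcross S.
Proof.
move=> wS; rewrite /Zcross (surjective_pairing w) finset.in_setX !finset.in_set.
by apply/andP; split; apply/existsP; exists w; rewrite wS eqxx.
Qed.

Lemma Zcross_nonempty S z : z \in Zcross S -> exists w, w \in S.
Proof.
rewrite /Zcross (surjective_pairing z) finset.in_setX finset.in_set.
by case/andP => /existsP [w /andP [wS _]] _; exists w.
Qed.

Lemma DAff_sub_Zcross S : DAff (R := R) S `<=` [set z | z \in Zcross S].
Proof.
move=> z [alpha [_ Hz]].
have coord_hit (f : 'I_d * 'I_d -> 'I_d) k : sigma R z 0 k = 1 ->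
    (forall w, sigma R w 0 k = (f z == f w)%:R) -> [exists w in S, f w == f z].
  move=> z1 Hw; apply: contraT => /existsPn Hn; move: z1.
  rewrite Hz lincomb_sigmaE big1; first by move/esym/eqP; rewrite oner_eq0.
  by move=> w wS; rewrite Hw eq_sym; move: (Hn w); rewrite wS /= => /negbTE->; rewrite mulr0.
rewrite /Zcross (surjective_pairing z) /= finset.in_setX !finset.in_set.
apply/andP; split.
- by apply: (coord_hit fst (lshift d z.1)) => [|w]; rewrite sigma_lshift ?eqxx.
- by apply: (coord_hit snd (rshift d z.2)) => [|w]; rewrite sigma_rshift ?eqxx.
Qed.

(* The coefficients of any linear combination equal to [sigma z] sum to one:
   compare the sums of the left blocks. *)
Lemma DAff_lincomb S (alpha : _ -> R) z :
  sigma R z = \sum_(w in S) alpha w *: sigma R w -> DAff (R := R) S z.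
Proof.
move=> Hz; exists alpha; split => //.
rewrite -(sum_sigma_lshift z) Hz.
under [RHS]eq_bigr do rewrite lincomb_sigmaE.
rewrite exchange_big /=; apply: eq_bigr => w _.
by rewrite -mulr_sumr sum_sigma_lshift mulr1.
Qed.

Lemma Zcross_notin_DAff S : DAff (R := R) S <> [set z | z \in Zcross S] ->
  exists2 z, z \in Zcross S & ~ DAff (R := R) S z.
Proof.
move=> neqS; apply: contrapT => none; apply/neqS/seteqP; split; first exact: DAff_sub_Zcross.
by move=> z /= zZ; apply: contrapT => nDz; apply: none; exists z.
Qed.

Definition sigma_mx S : 'M[R]_(#|S|, d + d) := \matrix_(i < #|S|) sigma R (enum_val i).

Lemma DAff_submx S w0 (w0S : w0 \in S) z : (sigma R z <= sigma_mx S)%MS -> DAff (R := R) S z.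
Proof.
case/submxP => D HD; apply: (@DAff_lincomb S (fun w => D 0 (enum_rank_in w0S w))).
rewrite HD mulmx_sum_row [RHS]big_enum_val /=.
by apply: eq_bigr => i _; rewrite enum_valK_in /sigma_mx rowK.
Qed.

Lemma pairing_col k (u : 'rV[R]_k) (K : 'M[R]_k) c :
  pairing u (col c K)^T = (u *m K) 0 c.
Proof. by rewrite /pairing mxE; apply: eq_bigr => i _; rewrite !mxE. Qed.

Lemma separating_direction S w0 (w0S : w0 \in S) z : ~ DAff (R := R) S z ->
  exists v : 'rV[R]_(d + d),
    (forall w, w \in S -> pairing (sigma R w) v = 0) /\ pairing (sigma R z) v != 0.
Proof.
move=> nDz; have : ~~ (sigma R z <= sigma_mx S)%MS.
  by apply/negP => /(DAff_submx w0S).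
rewrite submxE => nz.
have /existsP [c zc] : [exists c, (sigma R z *m cokermx (sigma_mx S)) 0 c != 0].
  apply: contraR nz => /existsPn zc; apply/eqP/rowP => c.
  by rewrite [RHS]mxE; apply/eqP; move: (zc c); rewrite negbK.
exists (col c (cokermx (sigma_mx S)))^T; split; first last.
  by rewrite pairing_col.
move=> w wS; rewrite pairing_col.
have -> : sigma R w = row (enum_rank_in w0S w) (sigma_mx S).
  by rewrite /sigma_mx rowK enum_rankK_in.
by rewrite -row_mul mulmx_coker !mxE.
Qed.

End AffineSpan.

Lemma pairingD (R : realType) k (u v w : 'rV[R]_k) :
  pairing u (v + w) = pairing u v + pairing u w.
Proof. by rewrite /pairing -big_split; apply: eq_bigr => i _; rewrite mxE mulrDr. Qed.

Lemma pairingZ (R : realType) k (u v : 'rV[R]_k) a :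
  pairing u (a *: v) = a * pairing u v.
Proof. by rewrite /pairing mulr_sumr; apply: eq_bigr => i _; rewrite mxE mulrCA. Qed.

Lemma ae_constant (d0 : measure_display) (T : measurableType d0) (R : realType)
    (mu : {measure set T -> \bar R}) (P : T -> Prop) (q : T -> R) :
  (forall x y, P x -> P y -> q x = q y) -> {ae mu, forall x, P x} ->
  exists c, {ae mu, forall x, q x = c}.
Proof.
move=> qP aeP; have [[x0 Px0]|noP] := pselect (exists x0, P x0).
  by exists (q x0); apply: filterS aeP => x Px; exact: qP.
by exists 0; apply: filterS aeP => x Px; case: noP; exists x.
Qed.

Section Perturbation.
Variables (R : realType) (n d : nat) (mu : {measure set (n.-tuple R) -> \bar R}).
Variables (E : n.-tuple R -> 'rV[R]_(d + d)) (g : n.-tuple R -> R) (v : 'rV[R]_(d + d)).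
Implicit Types (z : 'I_d * 'I_d) (x y : n.-tuple R).

Definition perturb_energy x := E x + g x *: v.

Lemma gibbs_perturb z x :
  gibbs perturb_energy z x = gibbs E z x * expR (- (g x * pairing (sigma R z) v)).
Proof. by rewrite /gibbs /perturb_energy pairingD pairingZ opprD expRD. Qed.

Lemma aed_perturb_orth z :
  pairing (sigma R z) v = 0 -> aed mu perturb_energy z = aed mu E z.
Proof.
move=> zv; have eqG : gibbs perturb_energy z = gibbs E z.
  by apply/funext => x; rewrite gibbs_perturb zv mulr0 oppr0 expR0 mulr1.
by rewrite /aed /Defs.partition eqG.
Qed.

Lemma integrable_gibbs_perturb z (M : R) :
  measurable_fun setT g -> (forall x, `|g x| <= M) ->
  mu.-integrable setT (fun x => (gibbs E z x)%:E) ->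
  mu.-integrable setT (fun x => (gibbs perturb_energy z x)%:E).
Proof.
move=> mg gM intE; set b := pairing (sigma R z) v.
pose h x := expR (- (g x * b)).
have mh : measurable_fun setT h.
  apply: measurableT_comp; first exact: measurable_expR.
  by apply: measurable_funN; apply: measurable_funM.
have bh : [bounded h x | x in setT].
  exists (expR (M * `|b|)); split; first by rewrite num_real.
  move=> K HK x _ /=; rewrite ger0_norm ?expR_ge0 //.
  apply/ltW/(le_lt_trans _ HK); rewrite ler_expR.
  apply: (le_trans (ler_norm _)); rewrite normrN normrM.
  by rewrite ler_wpM2r.
apply: eq_integrable (integrableMl measurableT intE mh bh) => // x _ /=.
by rewrite gibbs_perturb.
Qed.

(* Unless [fine Z(z)] inverts to [0] (e.g. [Z(z) = +oo]), so that both densities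
   vanish, equality at [x] reads [exp (- g x <sigma z, v>) = Zhat(z) / Z(z)]. *)
Lemma aed_perturb_level z x y :
  pairing (sigma R z) v != 0 ->
  (forall x y, g x = g y -> gibbs E z x = gibbs E z y) ->
  aed mu perturb_energy z x = aed mu E z x ->
  aed mu perturb_energy z y = aed mu E z y ->
  aed mu E z x = aed mu E z y.
Proof.
move=> zv gE ex ey; rewrite /aed.
set Z := fine (Defs.partition mu E z).
set Zh := fine (Defs.partition mu perturb_energy z).
have [Z0|Z0] := eqVneq Z^-1 0; first by rewrite Z0 !mulr0.
have level u : aed mu perturb_energy z u = aed mu E z u ->
    expR (- (g u * pairing (sigma R z) v)) * Zh^-1 = Z^-1.
  rewrite /aed gibbs_perturb -/Z -/Zh -mulrA; apply: mulfI.
  by rewrite gt_eqF // expR_gt0.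
have Zh0 : Zh^-1 != 0 by apply: contraNneq Z0 => Zh0; rewrite -(level x ex) Zh0 mulr0.
have := level x ex; rewrite -(level y ey).
by move=> /(mulIf Zh0)/expR_inj/oppr_inj/(mulIf zv)/gE ->.
Qed.

End Perturbation.

Theorem theorem10 (R : realType) (n d : nat)
  (mu : {measure set (n.-tuple R) -> \bar R})
  (Ztrain : {set 'I_d * 'I_d})
  (p : 'I_d * 'I_d -> n.-tuple R -> R) :
  is_lebesgue_tuple mu ->
  (exists E : n.-tuple R -> 'rV[R]_(d + d),
      additive_energy_family mu (Zcross Ztrain) E /\
      forall z, z \in Zcross Ztrain -> {ae mu, forall x, p z x = aed mu E z x}) ->
  (forall z, z \in Zcross Ztrain -> ~ exists c : R, {ae mu, forall x, p z x = c}) ->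
  @DAff R d Ztrain <> [set z | z \in Zcross Ztrain] ->
  exists Ehat : n.-tuple R -> 'rV[R]_(d + d),
    additive_energy_family mu (Zcross Ztrain) Ehat /\
    (forall z, z \in Ztrain -> {ae mu, forall x, aed mu Ehat z x = p z x}) /\
    (exists z, z \in Zcross Ztrain /\
       ~ {ae mu, forall x, aed mu Ehat z x = p z x}).
Proof.
move=> _ [E [E_int p_aed]] p_nonconst /Zcross_notin_DAff [zs zsZ zs_notin].
have [w0 w0S] := Zcross_nonempty zsZ.
have [v [v_orth v_zs]] := separating_direction w0S zs_notin.
pose g x := expR (- gibbs E zs x).
have mg : measurable_fun setT g.
  apply: measurableT_comp; first exact: measurable_expR.
  by apply/measurable_funN/measurable_EFinP; exact: measurable_int (E_int zs zsZ).
have g_le1 x : `|g x| <= 1.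
  by rewrite ger0_norm ?expR_ge0 // expR_le1 oppr_le0 expR_ge0.
have g_inj x y : g x = g y -> gibbs E zs x = gibbs E zs y by move/expR_inj/oppr_inj.
exists (perturb_energy E g v); split; [|split].
- by move=> z /E_int; exact: integrable_gibbs_perturb mg g_le1.
- move=> w wS; rewrite aed_perturb_orth ?v_orth //.
  by apply: filterS (p_aed w (mem_Zcross wS)) => x ->.
- exists zs; split => // ae_eq; apply: (p_nonconst zs zsZ).
  apply: (@ae_constant _ _ _ mu
    (fun x => p zs x = aed mu E zs x /\ aed mu (perturb_energy E g v) zs x = p zs x)).
    move=> x y [-> ex] [-> ey]; apply: aed_perturb_level v_zs g_inj _ _.
      by rewrite ex.
    by rewrite ey.
  by apply: filterS2 (p_aed zs zsZ) ae_eq.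
Qed.
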